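(* For every integer $m\ge 122$ there exist $k,l\in\mathbb{N}$, pairwise distinct primes $p_1,\dots,p_k$ each congruent to $1$ modulo $4$, and pairwise distinct primes $q_1,\dots,q_l$ each congruent to $3$ modulo $4$, such that $$m=p_1+\cdots+p_k=q_1+\cdots+q_l.$$ *)

From mathcomp Require Import all_boot.

(* Richert's argument: if every m in [122, H] is a sum of distinct primes
   congruent to a (mod 4) and at most X, and p = a (mod 4) is a prime with
   X < p <= H - 121, then every m in [122, H + p] is such a sum with primes at
   most p (add p to a representation of m - p when m > H).  A finite search
   and a few such steps reach X = 2^14 with H >= 16 X + 122.  Beyond that an
   elementary Chebyshev-Erdos estimate gives at least 241 primes = a (mod 4)
   in (X, 16 X + 1], and adding all of them preserves this invariant while H
   grows by at least 241 (X + 1).  For the estimate, take d = 5 if a = 1 and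
   d = 3 if a = 3: the product of the 4i + d (i < M) is at least 2^M times the
   product of the 2i + 1, and its quotient by the latter divides a product of
   prime powers q <= 4M + 1 with q = a (mod 4), which is at most
   (4M + 1)^sqrt(4M + 1) times the product of the primes p = a (mod 4) up to
   4M + 1; the primes up to X contribute at most 4^X. *)

From mathcomp Require Import all_boot.
From mathcomp Require Import zify.

Set Implicit Arguments.
Unset Strict Implicit.
Unset Printing Implicit Defensive.

Definition prime_mod4 a p := prime p && (p %% 4 == a).

Definition primes_mod4_between a X Y := [seq p <- index_iota X.+1 Y.+1 | prime_mod4 a p].

Lemma dvdn_logn m n : 0 < m -> 0 < n ->
  (forall p, prime p -> logn p m <= logn p n) -> m %| n.
Proof.
move=> m_gt0 n_gt0 le_logn; apply/dvdn_partP => // p.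
rewrite mem_primes => /and3P[p_pr _ _].
by rewrite p_part pfactor_dvdn // le_logn.
Qed.

Lemma logn_prod (I : Type) (r : seq I) (P : pred I) (F : I -> nat) p :
  (forall i, P i -> 0 < F i) ->
  logn p (\prod_(i <- r | P i) F i) = \sum_(i <- r | P i) logn p (F i).
Proof.
move=> F_gt0; elim: r => [|i r IHr]; first by rewrite !big_nil logn1.
rewrite !big_cons; case: ifP => Pi; last exact: IHr.
by rewrite lognM ?F_gt0 ?IHr ?prodn_cond_gt0.
Qed.

Lemma logn_count_dvd_upto p n K : prime p -> 0 < n -> n <= K ->
  logn p n = \sum_(1 <= k < K) (p ^ k %| n).
Proof.
move=> p_pr n_gt0 le_nK; rewrite logn_count_dvd // (big_cat_nat n_gt0 le_nK) //=.
rewrite [X in _ = _ + X]big1_seq ?addn0 // => k /andP[_].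
rewrite mem_index_iota => /andP[le_nk _]; rewrite gtnNdvd //.
exact: leq_ltn_trans le_nk (ltn_expl _ (prime_gt1 p_pr)).
Qed.

Lemma sum_nat_of_bool (I : Type) (r : seq I) (P : pred I) :
  \sum_(i <- r) P i = count P r.
Proof. by rewrite -sum1_count [RHS]big_mkcond; apply: eq_bigr => i _; case: (P i). Qed.

Lemma count_index_iota_le (P : pred nat) a b t :
  (forall k, a <= k < b -> P k -> 0 < k <= t) -> count P (index_iota a b) <= t.
Proof.
move=> P_range; rewrite -size_filter -(size_iota 1 t).
apply: uniq_leq_size; first exact/filter_uniq/iota_uniq.
by move=> k; rewrite mem_filter mem_index_iota mem_iota => /andP[/P_range/[apply]]; lia.
Qed.

Lemma count_mod_eq q r M : r < q ->
  \sum_(0 <= i < M) (i %% q == r) = M %/ q + (r < M %% q).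
Proof.
move=> lt_rq; have q_gt0 : 0 < q by case: q lt_rq.
elim: M => [|M IHM]; first by rewrite big_geq // div0n mod0n.
rewrite big_nat_recr //= IHM modnS divnS //.
case: (boolP (q %| M.+1)) => [dvd_q|_] /=.
  have last_res : (M %% q).+1 = q.
    apply/eqP; rewrite eqn_leq ltn_pmod //=; apply: contraLR dvd_q; rewrite -ltnNge.
    by move=> lt_q; rewrite /dvdn -addn1 -modnDml addn1 modn_small.
  have : r <= M %% q by rewrite -ltnS last_res.
  set x := M %% q; lia.
set x := M %% q; lia.
Qed.

Lemma count_mod_le q r r' M : r < q -> r' < q ->
  \sum_(0 <= i < M) (i %% q == r) <=
  \sum_(0 <= i < M) (i %% q == r') + ((r < r') && (r < M)).
Proof.
move=> lt_rq lt_r'q; rewrite !count_mod_eq //; have := leq_mod M q.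
by case: (ltnP r r'); case: (ltnP r M); case: (ltnP r (M %% q)); case: (ltnP r' (M %% q)); lia.
Qed.

Lemma count_dvdn_mod q c d r M : 0 < q ->
  (forall i, i < q -> (q %| c * i + d) = (i == r)) ->
  \sum_(0 <= i < M) (q %| c * i + d) = \sum_(0 <= i < M) (i %% q == r).
Proof.
move=> q_gt0 dvd_res; apply: eq_bigr => i _; rewrite -dvd_res ?ltn_pmod //.
by rewrite /dvdn -[in RHS]modnDml modnMmr modnDml.
Qed.

Lemma dvdn_2i1 q i : odd q -> i < q -> (q %| 2 * i + 1) = (i == q./2).
Proof.
move=> q_odd lt_iq; have q_eq := odd_double_half q; rewrite q_odd -muln2 in q_eq.
apply/idP/eqP => [/dvdnP[k ek] | ->]; last by apply/dvdnP; exists 1; lia.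
have : k < 2 by nia.
by case: k ek => [|[|]] //= ek _; lia.
Qed.

Lemma dvdn_4i3 q i : odd q -> i < q ->
  (q %| 4 * i + 3) = (i == if q %% 4 == 1 then (3 * q - 3) %/ 4 else (q - 3) %/ 4).
Proof.
move=> q_odd lt_iq; have q_mod2 : q %% 2 = 1 by rewrite modn2 q_odd.
apply/idP/eqP => [/dvdnP[k ek] | ->].
  have : k < 4 by nia.
  by case: k ek => [|[|[|[|]]]] //= ek _; case: ifP; lia.
by apply/dvdnP; case: ifP => q_mod4; [exists 3 | exists 1]; lia.
Qed.

Lemma dvdn_4i5 q i : odd q -> 1 < q -> i < q ->
  (q %| 4 * i + 5) = (i == if q %% 4 == 1 then (q - 5) %/ 4 else (3 * q - 5) %/ 4).
Proof.
move=> q_odd q_gt1 lt_iq; have q_mod2 : q %% 2 = 1 by rewrite modn2 q_odd.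
apply/idP/eqP => [/dvdnP[k ek] | ->].
  have : k < 5 by nia.
  by case: k ek => [|[|[|[|[|]]]]] //= ek _; case: ifP; lia.
by apply/dvdnP; case: ifP => q_mod4; [exists 1 | exists 3]; lia.
Qed.

Lemma count_dvdn_4i3_le q M : odd q ->
  \sum_(0 <= i < M) (q %| 4 * i + 3) <=
  \sum_(0 <= i < M) (q %| 2 * i + 1) + ((q %% 4 == 3) && (q <= 4 * M + 1)).
Proof.
move=> q_odd; have q_gt0 : 0 < q by case: q q_odd.
have q_mod2 : q %% 2 = 1 by rewrite modn2 q_odd.
rewrite (count_dvdn_mod _ q_gt0 (fun i => dvdn_4i3 q_odd)).
rewrite (count_dvdn_mod _ q_gt0 (fun i => dvdn_2i1 q_odd)).
apply: leq_trans (count_mod_le (r' := q./2) M _ _) _; rewrite ?leq_add2l; (try case: ifP); lia.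
Qed.

Lemma count_dvdn_4i5_le q M : odd q -> 1 < q ->
  \sum_(0 <= i < M) (q %| 4 * i + 5) <=
  \sum_(0 <= i < M) (q %| 2 * i + 1) + ((q %% 4 == 1) && (q <= 4 * M + 1)).
Proof.
move=> q_odd q_gt1; have q_gt0 := ltnW q_gt1.
have q_mod2 : q %% 2 = 1 by rewrite modn2 q_odd.
rewrite (count_dvdn_mod _ q_gt0 (fun i => dvdn_4i5 q_odd q_gt1)).
rewrite (count_dvdn_mod _ q_gt0 (fun i => dvdn_2i1 q_odd)).
apply: leq_trans (count_mod_le (r' := q./2) M _ _) _; rewrite ?leq_add2l; (try case: ifP); lia.
Qed.

(* Divisible by every prime power q <= x with q = a (mod 4): such a q is
   either a prime = a (mod 4) or a power p ^ k, k >= 2, with p * p <= x. *)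
Definition Lmod4 a x :=
  \prod_(1 <= p < x.+1 | prime p && ((p %% 4 == a) || (p * p <= x))) p ^ trunc_log p x.

Lemma Lmod4_gt0 a x : 0 < Lmod4 a x.
Proof. by apply: prodn_cond_gt0 => p /andP[p_pr _]; rewrite expn_gt0 prime_gt0. Qed.

Lemma trunc_log_le_logn_Lmod4 a x p : prime p -> p <= x ->
  (p %% 4 == a) || (p * p <= x) -> trunc_log p x <= logn p (Lmod4 a x).
Proof.
move=> p_pr le_px p_sel; rewrite -pfactor_dvdn ?Lmod4_gt0 //.
rewrite /Lmod4 big_mkcond (bigD1_seq p) /= ?p_pr ?p_sel ?dvdn_mulr //.
  by rewrite mem_index_iota prime_gt0.
exact: iota_uniq.
Qed.

Lemma count_pow_mod4_le_logn_Lmod4 a x p K : prime p ->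
  \sum_(1 <= k < K) ((p ^ k %% 4 == a) && (p ^ k <= x)) <= logn p (Lmod4 a x).
Proof.
move=> p_pr; have p_gt1 := prime_gt1 p_pr.
pose selected := (p <= x) && ((p %% 4 == a) || (p * p <= x)).
have pow_selected k : 0 < k -> (p ^ k %% 4 == a) && (p ^ k <= x) -> selected.
  move=> k_gt0 /andP[/eqP pk_mod4 le_pk_x]; apply/andP; split.
    by apply: leq_trans le_pk_x; rewrite -{1}(expn1 p) leq_pexp2l // ltnW.
  case: k k_gt0 pk_mod4 le_pk_x => [|[|k]] // _; first by rewrite expn1 => ->; rewrite eqxx.
  by move=> _ le_pk_x; rewrite (leq_trans _ le_pk_x) ?orbT // mulnn leq_pexp2l // ltnW.
rewrite sum_nat_of_bool.
apply: (@leq_trans (if selected then trunc_log p x else 0)).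
  apply: count_index_iota_le => k /andP[k_gt0 _] pk_sel.
  by rewrite k_gt0 (pow_selected k) //; case/andP: pk_sel => _; apply: trunc_log_max.
by case: ifP => // /andP[]; apply: trunc_log_le_logn_Lmod4.
Qed.

Lemma Lmod4_le a x t : 0 < x -> (forall p, p * p <= x -> p <= t) ->
  Lmod4 a x <= x ^ t * \prod_(p <- primes_mod4_between a 0 x) p.
Proof.
move=> x_gt0 small_le_t.
pose small p := prime p && (p * p <= x).
have factor_le p : prime p -> (p %% 4 == a) || (p * p <= x) ->
    p ^ trunc_log p x <= (if small p then x else 1) * (if prime_mod4 a p then p else 1).
  move=> p_pr p_sel; have p_gt1 := prime_gt1 p_pr.
  have le_pow_x := trunc_logP p_gt1 x_gt0; rewrite /small /prime_mod4 p_pr /=.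
  case: leqP p_sel => [_ _|lt_x_pp].
    by rewrite (leq_trans le_pow_x) ?leq_pmulr //; case: ifP => _ //; apply: prime_gt0.
  have log_le1 : trunc_log p x <= 1.
    by rewrite -ltnS -(ltn_exp2l _ _ p_gt1) (leq_ltn_trans le_pow_x) // -mulnn.
  by rewrite orbF => ->; rewrite mul1n (leq_trans (leq_pexp2l (ltnW p_gt1) log_le1)) ?expn1.
rewrite big_filter; apply: (@leq_trans (\prod_(1 <= p < x.+1)
    ((if small p then x else 1) * (if prime_mod4 a p then p else 1)))).
  rewrite /Lmod4 big_mkcond /=; apply: leq_prod => p _.
  case: ifP => [/andP[p_pr /(factor_le p p_pr)] // | _].
  by rewrite muln_gt0; apply/andP; split; [case: ifP | case: ifP => // /andP[/prime_gt0]].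
rewrite big_split /= -!big_mkcond leq_mul2r; apply/orP; right.
rewrite -(expn_sum _ _ _ (fun _ => 1)) leq_pexp2l // sum1_count.
by apply: count_index_iota_le => p _ /andP[p_pr /small_le_t]; rewrite prime_gt0.
Qed.

Lemma logn_prod_AP p c d M K : prime p -> 0 < d -> c * M + d <= K ->
  logn p (\prod_(0 <= i < M) (c * i + d)) =
  \sum_(1 <= k < K) \sum_(0 <= i < M) (p ^ k %| c * i + d).
Proof.
move=> p_pr d_gt0 le_K; rewrite logn_prod => [|i _]; last by rewrite addn_gt0 d_gt0 orbT.
rewrite exchange_big_nat; apply: eq_big_nat => i /andP[_ lt_iM].
by apply: logn_count_dvd_upto; rewrite ?addn_gt0 ?d_gt0 ?orbT //; apply: leq_trans le_K; nia.
Qed.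

Section ErdosBound.

Variables (a d M x : nat).
Hypotheses (d_odd : odd d) (d_gt1 : 1 < d).
Hypothesis count_dvdn_le : forall q, odd q -> 1 < q ->
  \sum_(0 <= i < M) (q %| 4 * i + d) <=
  \sum_(0 <= i < M) (q %| 2 * i + 1) + ((q %% 4 == a) && (q <= x)).

Lemma logn_prod_4i_le p : prime p ->
  logn p (\prod_(0 <= i < M) (4 * i + d)) <=
  logn p (\prod_(0 <= i < M) (2 * i + 1)) + logn p (Lmod4 a x).
Proof.
move=> p_pr; have d_gt0 := ltnW d_gt1; set K := 4 * M + d.
rewrite (@logn_prod_AP p 4 d M K) // (@logn_prod_AP p 2 1 M K) //; last by rewrite /K; lia.
have [-> | p_neq2] := eqVneq p 2.
  rewrite big1_seq // => k /andP[_]; rewrite mem_index_iota => /andP[k_gt0 _].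
  rewrite big1_seq // => i _; suff /negbTE-> : ~~ (2 ^ k %| 4 * i + d) by [].
  apply: contraL d_odd => /(dvdn_trans (dvdn_exp2l 2 k_gt0)).
  by rewrite expn1 dvdn_addr ?dvdn_mulr // dvdn2.
have p_odd : odd p by apply: contraR p_neq2 => /(prime_oddPn p_pr)->.
apply: (@leq_trans (\sum_(1 <= k < K)
    (\sum_(0 <= i < M) (p ^ k %| 2 * i + 1) + ((p ^ k %% 4 == a) && (p ^ k <= x))))).
  rewrite big_nat_cond [X in _ <= X]big_nat_cond.
  apply: leq_sum => k /andP[/andP[k_gt0 _] _]; apply: count_dvdn_le.
    by rewrite oddX p_odd orbT.
  by rewrite -(exp1n k) ltn_exp2r ?prime_gt1.
by rewrite big_split leq_add2l count_pow_mod4_le_logn_Lmod4.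
Qed.

Lemma exp2_le_Lmod4 : 2 ^ M <= Lmod4 a x.
Proof.
set O := \prod_(0 <= i < M) (2 * i + 1); set A := \prod_(0 <= i < M) (4 * i + d).
have O_gt0 : 0 < O by apply: prodn_cond_gt0 => i _; rewrite addn1.
have A_gt0 : 0 < A by apply: prodn_cond_gt0 => i _; rewrite addn_gt0 (ltnW d_gt1) orbT.
have OL_gt0 : 0 < O * Lmod4 a x by rewrite muln_gt0 O_gt0 Lmod4_gt0.
have growth : 2 ^ M * O <= A.
  have -> : 2 ^ M = \prod_(0 <= i < M) 2 by rewrite prod_nat_const_nat subn0.
  by rewrite -big_split /=; apply: leq_prod => i _; lia.
have A_dvd : A %| O * Lmod4 a x.
  apply: dvdn_logn => // p p_pr.
  by rewrite lognM ?Lmod4_gt0 // logn_prod_4i_le.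
by rewrite -(leq_pmul2r O_gt0) [X in _ <= X]mulnC (leq_trans growth) // dvdn_leq.
Qed.

End ErdosBound.

Lemma exp2_le_Lmod4_4M1 a M : (a == 1) || (a == 3) -> 2 ^ M <= Lmod4 a (4 * M + 1).
Proof.
case/orP=> /eqP->.
  by apply: (@exp2_le_Lmod4 _ 5) => // q q_odd q_gt1; apply: count_dvdn_4i5_le.
by apply: (@exp2_le_Lmod4 _ 3) => // q q_odd _; apply: count_dvdn_4i3_le.
Qed.

Definition primorial n := \prod_(1 <= p < n.+1 | prime p) p.

Lemma prime_dvd_fact p n : prime p -> (p %| n`!) = (p <= n).
Proof.
move=> p_pr; apply/idP/idP => [|le_pn]; last by rewrite dvdn_fact // prime_gt0.
elim: n => [|n IHn]; first by rewrite fact0 dvdn1 => /eqP p1; rewrite p1 in p_pr.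
by rewrite factS Euclid_dvdM // => /orP[/dvdn_leq-> // | /IHn/leqW].
Qed.

Lemma prod_primes_dvdn (s : seq nat) n : uniq s -> all prime s ->
  all (dvdn^~ n) s -> \prod_(p <- s) p %| n.
Proof.
elim: s => [|p s IHs] /=; first by rewrite big_nil dvd1n.
case/andP=> p_notin_s s_uniq /andP[p_pr s_pr] /andP[p_dvd s_dvd].
rewrite big_cons Gauss_dvd ?p_dvd ?IHs // prime_coprime // Euclid_dvd_prod // big_has.
apply/hasPn => q q_in /=; rewrite dvdn_prime2 ?(allP s_pr _ q_in) //.
by apply: contraNneq p_notin_s => ->.
Qed.

Lemma bin_mid_le m : 'C(m.*2.+1, m) <= 4 ^ m.
Proof.
have sym : 'C(m.*2.+1, m.+1) = 'C(m.*2.+1, m).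
  by rewrite -bin_sub; [congr 'C(_, _); lia | lia].
have two_terms : 'C(m.*2.+1, m) + 'C(m.*2.+1, m.+1) <= 2 ^ m.*2.+1.
  have -> : 2 ^ m.*2.+1 = \sum_(0 <= i < m.*2.+2) 'C(m.*2.+1, i).
    by rewrite -[2]/(1 + 1) expnDn big_mkord; apply: eq_bigr => i _; rewrite !exp1n !muln1.
  have le_m2 : m.+2 <= m.*2.+2 by rewrite ltnS -addnn leq_addr.
  rewrite (big_cat_nat (leq0n m) (leq_trans (leqnSn _) (ltnW le_m2))) /=.
  rewrite (big_cat_nat (leq_trans (leqnSn _) (leqnSn _)) le_m2) big_nat_recl // big_nat1.
  by rewrite /= addnCA leq_addr.
have : 2 ^ m.*2.+1 = 2 * 4 ^ m by rewrite expnS -mul2n expnM.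
lia.
Qed.

Lemma prime_dvd_bin_mid m p : prime p -> m.+1 < p <= m.*2.+1 -> p %| 'C(m.*2.+1, m).
Proof.
move=> p_pr /andP[lt_mp le_p2m]; have le_m2m : m <= m.*2.+1 by rewrite -addnn -addnS leq_addr.
have := bin_fact le_m2m; rewrite (_ : m.*2.+1 - m = m.+1); last by rewrite -addnn -addnS addKn.
move=> /(congr1 (dvdn p)); rewrite prime_dvd_fact // le_p2m !Euclid_dvdM // !prime_dvd_fact //.
by case/or4P => // [|/dvdn_leq|]; lia.
Qed.

Lemma primorial_le n : primorial n <= 4 ^ n.
Proof.
elim/ltn_ind: n => n IHn; rewrite /primorial.
have [le_n2 | lt_2n] := leqP n 2.
  by case: n le_n2 {IHn} => [|[|[|]]] // _; rewrite unlock.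
have := odd_double_half n; case: (boolP (odd n)) => [n_odd | n_even] /=; last first.
  case: n lt_2n IHn n_even => // k lt_2k IHk k_even _.
  have k_not_prime : ~~ prime k.+1.
    by apply/negP => /prime_oddPn/(_ k_even) k_eq; rewrite k_eq in lt_2k.
  rewrite big_mkcond big_nat_recr //= -big_mkcond (negbTE k_not_prime) muln1.
  by rewrite (leq_trans (IHk k _)) // leq_exp2l.
rewrite add1n => n_eq; set m := n./2 in n_eq; rewrite -n_eq.
have le_m2 : m.+2 <= m.*2.+2 by rewrite ltnS -addnn leq_addr.
rewrite (big_cat_nat _ le_m2) //=.
have small_primes : \prod_(1 <= p < m.+2 | prime p) p <= 4 ^ m.+1.
  by apply: IHn; rewrite -n_eq; lia.
have large_primes : \prod_(m.+2 <= p < m.*2.+2 | prime p) p <= 4 ^ m.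
  apply: leq_trans (bin_mid_le m); apply: dvdn_leq; first by rewrite bin_gt0 -addnn -addnS leq_addr.
  rewrite -big_filter; apply: prod_primes_dvdn; first exact/filter_uniq/iota_uniq.
    exact: filter_all.
  apply/allP => p; rewrite mem_filter mem_index_iota => /andP[p_pr range_p].
  by apply: prime_dvd_bin_mid; rewrite // ltnS.
by rewrite (leq_trans (leq_mul small_primes large_primes)) // -expnD addSn addnn.
Qed.

Lemma poly_lt_exp4 j : 16 * (j + 10) * (2 ^ (j + 10) + 240) < 4 ^ (j + 9).
Proof.
elim: j => [|j IHj]; first by [].
rewrite !addSn !expnS; set u := 2 ^ (j + 10); set v := 4 ^ (j + 9); nia.
Qed.

Lemma sqrt_bound_exists X : 2 ^ 14 <= X -> exists t,
  (forall p, p * p <= 16 * X + 1 -> p <= t) /\ (16 * X + 1) ^ (t + 240) < 4 ^ X.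
Proof.
move=> X_large; set y := 16 * X + 1; set n := trunc_log 4 y.
have y_gt0 : 0 < y by rewrite /y addn1.
have le_4n_y : 4 ^ n <= y := trunc_logP (isT : 1 < 4) y_gt0.
have lt_y_4n : y < 4 ^ n.+1 := trunc_log_ltn y (isT : 1 < 4).
have n_ge9 : 9 <= n.
  apply: trunc_log_max => //.
  have -> : 4 ^ 9 = 16 * 2 ^ 14 by rewrite -[4]/(2 ^ 2) -expnM -[16]/(2 ^ 4) -expnD.
  by rewrite /y (leq_trans _ (leq_addr _ _)) // leq_mul2l X_large orbT.
have [j n_eq] : exists j, n = j + 9 by exists (n - 9); rewrite subnK.
have sq_t : 4 ^ n.+1 = 2 ^ n.+1 * 2 ^ n.+1 by rewrite -expnD addnn -mul2n expnM.
exists (2 ^ n.+1); split=> [p le_pp_y|].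
  have : p * p < 2 ^ n.+1 * 2 ^ n.+1 by rewrite -sq_t (leq_ltn_trans le_pp_y).
  set t := 2 ^ n.+1; nia.
have poly_le : n.+1 * (2 ^ n.+1 + 240) <= X.
  have := poly_lt_exp4 j; rewrite (addnS j 9) -n_eq => /leq_trans/(_ le_4n_y).
  by rewrite /y; set t := 2 ^ n.+1; lia.
rewrite (@leq_trans ((4 ^ n.+1) ^ (2 ^ n.+1 + 240))) ?ltn_exp2r ?addn_gt0 ?orbT //.
by rewrite -expnM leq_exp2l.
Qed.

Lemma primes_mod4_between_cat a X Y Z : X <= Y -> Y <= Z ->
  primes_mod4_between a X Z = primes_mod4_between a X Y ++ primes_mod4_between a Y Z.
Proof.
move=> le_XY le_YZ; rewrite /primes_mod4_between /index_iota -filter_cat !subSS.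
rewrite -[in iota Y.+1 _](subnKC le_XY) -addSn -iotaD.
by congr (filter _ (iota _ _)); lia.
Qed.

Lemma leq_size_sumn (s : seq nat) b : all (leq b) s -> size s * b <= sumn s.
Proof.
elim: s => //= x s IHs /andP[le_bx /IHs le_s].
by rewrite mulSn leq_add.
Qed.

Lemma prod_leq_exp_size (s : seq nat) y : all (leq^~ y) s -> \prod_(p <- s) p <= y ^ size s.
Proof.
elim: s => [|x s IHs] /=; first by rewrite big_nil.
by case/andP=> le_xy /IHs le_s; rewrite big_cons expnS leq_mul.
Qed.

Lemma size_primes_mod4_between a X : (a == 1) || (a == 3) -> 2 ^ 14 <= X ->
  241 <= size (primes_mod4_between a X (16 * X + 1)).
Proof.
move=> a13 X_large; set y := 16 * X + 1; set c := size _.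
have [t [t_sqrt t_exp]] := sqrt_bound_exists X_large.
have y_gt0 : 0 < y by rewrite /y addn1.
have lower : 2 ^ (4 * X) <= y ^ t * \prod_(p <- primes_mod4_between a 0 y) p.
  by rewrite (leq_trans (exp2_le_Lmod4_4M1 _ a13)) // mulnA Lmod4_le.
have le_Xy : X <= y by rewrite /y; lia.
rewrite (primes_mod4_between_cat a (leq0n X) le_Xy) big_cat /= in lower.
have old_primes : \prod_(p <- primes_mod4_between a 0 X) p <= 4 ^ X.
  apply: leq_trans (primorial_le X); rewrite big_filter big_mkcond [X in _ <= X]big_mkcond.
  apply: leq_prod => p _; rewrite /prime_mod4.
  by case p_pr: (prime p) => //=; case: ifP => // _; apply: prime_gt0.
have new_primes : \prod_(p <- primes_mod4_between a X y) p <= y ^ c.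
  apply: prod_leq_exp_size; apply/allP => p.
  by rewrite mem_filter mem_index_iota ltnS => /andP[_ /andP[]].
have split4 : 2 ^ (4 * X) = 4 ^ X * 4 ^ X.
  by rewrite -expnD addnn -mul2n -(mulnA 2 2 X) expnM.
rewrite leqNgt; apply/negP => c_small.
have : 4 ^ X * 4 ^ X <= 4 ^ X * y ^ (t + 240).
  rewrite -split4 (leq_trans lower) // mulnCA leq_mul // expnD leq_mul //.
  by rewrite (leq_trans new_primes) // leq_pexp2l // -ltnS.
by rewrite leq_pmul2l ?expn_gt0 // leqNgt t_exp.
Qed.

Definition sums_cover a X lo hi := forall m, lo <= m <= hi -> exists ps : seq nat,
  [/\ uniq ps, all (prime_mod4 a) ps, all (leq^~ X) ps & sumn ps = m].

Lemma sums_cover_widen a X Y lo hi : X <= Y -> sums_cover a X lo hi -> sums_cover a Y lo hi.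
Proof.
move=> le_XY cover m /cover[ps [ps_uniq ps_mod4 ps_le ps_sum]]; exists ps; split=> //.
by apply/allP=> p /(allP ps_le) /leq_trans; apply.
Qed.

Lemma sums_cover_add a X lo hi p : prime_mod4 a p -> X < p -> p + lo <= hi.+1 ->
  sums_cover a X lo hi -> sums_cover a p lo (hi + p).
Proof.
move=> p_mod4 lt_Xp le_p cover m /andP[le_lo_m le_m_hi].
have [le_m | lt_hi_m] := leqP m hi.
  by apply: (sums_cover_widen (ltnW lt_Xp) cover); rewrite le_lo_m.
have [ps [ps_uniq ps_mod4 ps_le ps_sum]] : exists ps : seq nat,
    [/\ uniq ps, all (prime_mod4 a) ps, all (leq^~ X) ps & sumn ps = m - p].
  by apply: cover; apply/andP; split; lia.
have p_notin : p \notin ps by apply/negP=> /(allP ps_le); rewrite leqNgt lt_Xp.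
exists (p :: ps); split=> /=; rewrite ?p_notin ?p_mod4 ?leqnn //=.
  by apply/allP=> q /(allP ps_le) le_qX; apply: leq_trans le_qX (ltnW lt_Xp).
by rewrite ps_sum subnKC //; lia.
Qed.

Lemma sums_cover_addl a X lo H l : sorted ltn (X :: l) -> all (prime_mod4 a) l ->
  all (fun p => p + lo <= H.+1) l -> sums_cover a X lo H ->
  sums_cover a (last X l) lo (H + sumn l).
Proof.
elim: l X H => [|p l IHl] X H /=; first by rewrite addn0.
case/andP=> lt_Xp l_sorted /andP[p_mod4 l_mod4] /andP[le_p l_le] cover.
rewrite addnA; apply: IHl => //; last exact: sums_cover_add p_mod4 lt_Xp le_p cover.
by apply: sub_all l_le => q /= le_q; rewrite (leq_trans le_q) // ltnS leq_addr.
Qed.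

Lemma sums_cover_between a lo X H Y : X <= Y -> Y + lo <= H.+1 -> sums_cover a X lo H ->
  sums_cover a Y lo (H + sumn (primes_mod4_between a X Y)).
Proof.
move=> le_XY le_Y cover; set l := primes_mod4_between a X Y.
have l_range p : p \in l -> X < p <= Y by rewrite mem_filter mem_index_iota ltnS => /andP[].
apply: sums_cover_widen (sums_cover_addl _ _ _ cover).
- by have := mem_last X l; rewrite inE => /predU1P[-> | /l_range/andP[]].
- rewrite /= path_sortedE; last exact: ltn_trans.
  apply/andP; split; first by apply/allP=> p /l_range/andP[].
  exact/sorted_filter/iota_ltn_sorted/ltn_trans.
- exact: filter_all.
by apply/allP=> p /l_range/andP[_ le_pY]; apply: leq_trans le_Y; rewrite leq_add2r.
Qed.

Fixpoint subset_sum (s : seq nat) m : option (seq nat) :=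
  if s is p :: s' then
    if p <= m then
      if subset_sum s' (m - p) is Some t then Some (p :: t) else subset_sum s' m
    else subset_sum s' m
  else if m == 0 then Some [::] else None.

Lemma subset_sumP s m t : subset_sum s m = Some t -> subseq t s /\ sumn t = m.
Proof.
elim: s m t => [|p s IHs] m t /=; first by case: eqP => // -> [<-].
have sub_cons t' : subseq t' s -> subseq t' (p :: s).
  by move=> /subseq_trans; apply; apply: subseq_cons.
case: leqP => [le_pm | _]; last by case/IHs => /sub_cons.
case e: (subset_sum s (m - p)) => [t'|]; last by case/IHs => /sub_cons.
by case=> <-; have [sub_t' sum_t'] := IHs _ _ e; rewrite /= eqxx sub_t' sum_t' subnKC.
Qed.

Lemma sums_cover_subset_sum a X lo H :
  all (fun m => subset_sum (primes_mod4_between a 0 X) m != None) (index_iota lo H.+1) ->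
  sums_cover a X lo H.
Proof.
move=> /allP found m range_m.
have : subset_sum (primes_mod4_between a 0 X) m != None by apply: found; rewrite mem_index_iota.
case e: subset_sum => [t|] // _; have [sub_t sum_t] := subset_sumP e.
exists t; split=> //; first exact: subseq_uniq sub_t (filter_uniq _ (iota_uniq _ _)).
  by apply/allP=> p /(mem_subseq sub_t); rewrite mem_filter => /andP[].
by apply/allP=> p /(mem_subseq sub_t); rewrite mem_filter mem_index_iota ltnS => /and3P[].
Qed.

Fixpoint richert_iter a lo cap n X H : nat * nat :=
  if n is n'.+1 then
    let Y := minn (H.+1 - lo) cap in
    richert_iter a lo cap n' Y (H + sumn (primes_mod4_between a X Y))
  else (X, H).

Lemma sums_cover_iter a lo cap n X H : X <= cap -> X + lo <= H.+1 -> sums_cover a X lo H ->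
  sums_cover a (richert_iter a lo cap n X H).1 lo (richert_iter a lo cap n X H).2.
Proof.
elim: n X H => //= n IHn X H le_X_cap le_XH cover.
have le_XY : X <= minn (H.+1 - lo) cap by rewrite leq_min le_X_cap andbT; lia.
have le_Y : minn (H.+1 - lo) cap + lo <= H.+1 by lia.
apply: IHn; [exact: geq_minr | | exact: sums_cover_between].
by apply: leq_trans le_Y _; rewrite ltnS leq_addr.
Qed.

Lemma sums_cover_certificate a X0 H0 n (XH := richert_iter a 122 (2 ^ 12) n X0 H0) :
  all (fun m => subset_sum (primes_mod4_between a 0 X0) m != None) (index_iota 122 H0.+1) ->
  X0 <= 2 ^ 12 -> X0 + 122 <= H0.+1 -> XH.1 <= 2 ^ 14 -> 16 * 2 ^ 14 + 1 + 122 <= XH.2.+1 ->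
  exists2 H, sums_cover a (2 ^ 14) 122 H & 16 * 2 ^ 14 + 1 + 122 <= H.+1.
Proof.
move=> base le_X0 le_H0 le_X le_H; exists XH.2 => //.
exact/(sums_cover_widen le_X)/sums_cover_iter/sums_cover_subset_sum.
Qed.

(* The initial intervals [122, 603] and [122, 230] are covered by primes up to
   109 and 67 respectively; capping the bulk steps at 2 ^ 12 keeps the
   primality tests cheap. *)
Lemma sums_cover_start a : (a == 1) || (a == 3) ->
  exists2 H, sums_cover a (2 ^ 14) 122 H & 16 * 2 ^ 14 + 1 + 122 <= H.+1.
Proof.
case/orP=> /eqP->.
  by apply: (@sums_cover_certificate 1 109 603 2); vm_compute.
by apply: (@sums_cover_certificate 3 67 230 3); vm_compute.
Qed.

Lemma sums_cover_grow a X H : (a == 1) || (a == 3) -> 2 ^ 14 <= X ->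
  16 * X + 1 + 122 <= H.+1 -> sums_cover a X 122 H ->
  exists H', [/\ sums_cover a (16 * X + 1) 122 H',
                 16 * (16 * X + 1) + 1 + 122 <= H'.+1 & H < H'].
Proof.
move=> a13 X_large le_H cover; have many := size_primes_mod4_between a13 X_large.
set l := primes_mod4_between a X (16 * X + 1) in many *.
have large_sum : size l * X.+1 <= sumn l.
  by apply: leq_size_sumn; apply/allP=> p; rewrite mem_filter mem_index_iota => /and3P[].
exists (H + sumn l); split; last by nia.
  by apply: sums_cover_between; rewrite // -[X in X <= _]addn0 leq_add ?leq_pmull.
nia.
Qed.

Lemma sums_cover_unbounded a m : (a == 1) || (a == 3) ->
  exists X H, sums_cover a X 122 H /\ m <= H.
Proof.
move=> a13; suff [X [H [cover _ _ le_mH]]] : exists X H,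
    [/\ sums_cover a X 122 H, 2 ^ 14 <= X, 16 * X + 1 + 122 <= H.+1 & m <= H].
  by exists X, H.
elim: m => [|m [X [H [cover X_large le_H le_mH]]]].
  by have [H cover le_H] := sums_cover_start a13; exists (2 ^ 14), H.
have [H' [cover' le_H' lt_HH']] := sums_cover_grow a13 X_large le_H cover.
by exists (16 * X + 1), H'; split=> //; [lia | apply: leq_ltn_trans lt_HH'].
Qed.

Unset Implicit Arguments.

Theorem corollary2p6 (m : nat) : 122 <= m ->
  exists (ps qs : seq nat),
    [/\ uniq ps, all (fun p => prime p && (p %% 4 == 1)) ps & sumn ps = m] /\
    [/\ uniq qs, all (fun q => prime q && (q %% 4 == 3)) qs & sumn qs = m].
Proof.
move=> m_large.
have represent a : (a == 1) || (a == 3) ->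
    exists ps : seq nat, [/\ uniq ps, all (prime_mod4 a) ps & sumn ps = m].
  case/(sums_cover_unbounded m) => X [H [cover le_mH]].
  have /cover[ps [ps_uniq ps_mod4 _ ps_sum]] : 122 <= m <= H by rewrite m_large.
  by exists ps.
have [ps ps_sum] := represent 1 isT; have [qs qs_sum] := represent 3 isT.
by exists ps, qs.
Qed.
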